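(* Let $\{p_\sigma\}$ and $\{p'_\sigma\}$ be two systems of probability parameters indexed by the non-empty proper subsets $\sigma\subsetneq[n]$, with $p_\sigma\le p'_\sigma$ for all $\sigma$. Let $\underline{\mathbb P}_n,\underline{\mathbb P}'_n$ be the lower measures and $\overline{\mathbb P}_n,\overline{\mathbb P}'_n$ the upper measures on the set of simplicial subcomplexes of $\Delta_n$ associated to $\{p_\sigma\}$ and $\{p'_\sigma\}$ respectively. Let $\mathfrak P$ denote the set of pairs $(X,Y)$ of simplicial complexes $Y\subseteq X\subseteq\Delta_n$, with projections $\pi_1(X,Y)=X$, $\pi_2(X,Y)=Y$. (A) There exists a probability measure $\underline\mu$ on $\mathfrak P$ with $(\pi_1)_*\underline\mu=\underline{\mathbb P}'_n$ and $(\pi_2)_*\underline\mu=\underline{\mathbb P}_n$, and there exists a probability measure $\overline\mu$ on $\mathfrak P$ with $(\pi_1)_*\overline\mu=\overline{\mathbb P}'_n$ and $(\pi_2)_*\overline\mu=\overline{\mathbb P}_n$. (B) If additionally $p_\sigma=p'_\sigma$ for every simplex $\sigma$ of dimension $\le k$ (for an integer $k\ge0$), then $\underline\mu$ in (A) can be taken supported on pairs $(X,Y)$ with identical $k$-skeleta, $X^{(k)}=Y^{(k)}$. (C) If additionally $p_\sigma=p'_\sigma$ for every simplex $\sigma$ of dimension $>k$ (for a fixed integer $k$), then $\overline\mu$ in (A) can be taken supported on pairs $(X,Y)$ with $X-X^{(k)}=Y-Y^{(k)}$, i.e. $X$ and $Y$ have the same simplexes of dimension $>k$.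
   Context: $[n]=\{0,\dots,n\}$, $\Delta_n$ is the simplex consisting of all non-empty subsets of $[n]$; a simplex $\sigma$ has dimension $|\sigma|-1$. Given parameters $p_\sigma\in[0,1]$ for non-empty proper subsets $\sigma\subsetneq[n]$, let $X$ be the random hypergraph containing each such $\sigma$ independently with probability $p_\sigma$. The lower measure is the law of the largest simplicial complex contained in $X$ ($\sigma$ included iff all its non-empty subsets lie in $X$); the upper measure is the law of the smallest simplicial complex containing $X$ ($\sigma$ included iff some superset of $\sigma$ lies in $X$). $X^{(k)}$ denotes the $k$-skeleton. *)

(* Vertex set [n] = {0,...,n} is 'I_n.+1; a simplex is a
   non-empty {set 'I_n.+1}; a (sub)complex of Delta_n is a {set {set 'I_n.+1}}.
   Probability measures on the finite sets involved are given by their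
   probability mass functions, with values in an arbitrary realFieldType R. *)
From HB Require Import structures.
From mathcomp Require Import all_boot all_order all_algebra.
Set Implicit Arguments. Unset Strict Implicit. Unset Printing Implicit Defensive.
Import Order.TTheory GRing.Theory Num.Theory.
Local Open Scope ring_scope.

Section Defs.
Variable n : nat.
Local Notation V := 'I_n.+1.
Local Notation simp := {set V}.
Local Notation cplx := {set {set V}}.

(* non-empty proper subsets of [n]: the index set of the parameters *)
Definition proper_face (s : simp) : bool := (s != set0) && (s != setT).
Definition proper_faces : cplx := [set s | proper_face s].

Definition is_complex (K : cplx) : bool :=
  [forall s in K, (s != set0) &&
     [forall t : simp, ((t != set0) && (t \subset s)) ==> (t \in K)]].

(* law of the random hypergraph X: probability of a given hypergraph H
   (a set of non-empty proper subsets) *)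
Definition hyp_weight (R : realFieldType) (p : simp -> R) (H : cplx) : R :=
  \prod_(s | proper_face s) (if s \in H then p s else 1 - p s).

Definition lower_cplx (H : cplx) : cplx :=
  [set s : simp | (s != set0) &&
     [forall t : simp, ((t != set0) && (t \subset s)) ==> (t \in H)]].

Definition upper_cplx (H : cplx) : cplx :=
  [set s : simp | (s != set0) && [exists t : simp, (t \in H) && (s \subset t)]].

Definition lower_measure (R : realFieldType) (p : simp -> R) (K : cplx) : R :=
  \sum_(H : cplx | (H \subset proper_faces) && (lower_cplx H == K)) hyp_weight p H.
Definition upper_measure (R : realFieldType) (p : simp -> R) (K : cplx) : R :=
  \sum_(H : cplx | (H \subset proper_faces) && (upper_cplx H == K)) hyp_weight p H.

Definition pairsP (z : cplx * cplx) : bool :=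
  [&& is_complex z.1, is_complex z.2 & z.2 \subset z.1].

Definition is_coupling (R : realFieldType) (mu : cplx * cplx -> R)
    (P1 P2 : cplx -> R) : Prop :=
  [/\ (forall z, 0 <= mu z),
      \sum_(z : cplx * cplx) mu z = 1,
      (forall z, mu z != 0 -> pairsP z),
      (forall X : cplx, \sum_(Y : cplx) mu (X, Y) = P1 X) &
      (forall Y : cplx, \sum_(X : cplx) mu (X, Y) = P2 Y)].

(* k-skeleton: simplices of dimension <= k, i.e. of cardinality <= k+1 *)
Definition skeleton (k : nat) (K : cplx) : cplx := [set s in K | #|s| <= k.+1]%N.

Definition above_dim (k : int) (K : cplx) : cplx :=
  [set s in K | k < (#|s|%:Z - 1)].
End Defs.

From mathcomp Require Import all_boot all_order all_algebra.
Set Implicit Arguments. Unset Strict Implicit. Unset Printing Implicit Defensive.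
Import Order.TTheory GRing.Theory Num.Theory.
Local Open Scope ring_scope.

(* Couple the two random hypergraphs face by face, through a common uniform
   variable U_s: put s in X' iff U_s < p'_s and in X iff U_s < p_s.  Then
   X is contained in X', and X, X' differ only on faces with p_s < p'_s.
   Pushing the pair (X', X) forward by the monotone maps "largest complex
   below" and "smallest complex above" gives couplings of the lower and of
   the upper measures.  The k-skeleton of the lower complex only depends on
   the faces of dimension <= k of the hypergraph, and the part above
   dimension k of the upper complex only on its faces of dimension > k,
   which gives (B) and (C). *)

Lemma sumr_bool_pair (R : nmodType) (F : bool * bool -> R) :
  \sum_j F j = F (true, true) + F (true, false) + (F (false, true) + F (false, false)).
Proof.
rewrite (eq_bigr (fun j => F (j.1, j.2))); last by case.
by rewrite -(pair_bigA _ (fun x y => F (x, y))) /= !big_bool.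
Qed.

Lemma sumr_neq0_exists (R : nmodType) (I : finType) (P : pred I) (F : I -> R) :
  \sum_(i | P i) F i != 0 -> exists2 i, P i & F i != 0.
Proof.
move=> nz; have [i /andP[Pi Fi]|none] := pickP [pred i | P i && (F i != 0)].
  by exists i.
by case/eqP: nz; apply: big1 => i Pi; have := none i; rewrite /= Pi => /negbFE/eqP.
Qed.

Lemma sum_ffun_fiber (R : comPzSemiRingType) (I T : finType) (c : I -> T -> R)
    (g : T -> bool) (H : {set I}) :
  \sum_(f : {ffun I -> T} | [set i | g (f i)] == H) \prod_i c i (f i) =
  \prod_i \sum_(j | g j == (i \in H)) c i j.
Proof.
rewrite bigA_distr_big_dep; apply: eq_bigl => f.
apply/eqP/familyP => [<- i|fH]; first by rewrite unfold_in /= inE.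
by apply/setP => i; have := fH i; rewrite unfold_in /= inE => /eqP.
Qed.

Section BernoulliCoupling.
Variable R : numDomainType.
Implicit Types (a b : R) (x y : bool).

(* The law of ([U < b], [U < a]) for U uniform on [0, 1]. *)
Definition bernoulli_coupling a b (j : bool * bool) : R :=
  match j with
  | (true, true) => a
  | (true, false) => b - a
  | (false, true) => 0
  | (false, false) => 1 - b
  end.

Lemma bernoulli_coupling_ge0 a b j :
  0 <= a <= b -> b <= 1 -> 0 <= bernoulli_coupling a b j.
Proof.
move=> /andP[a0 ab] b1.
by case: j => [[] []] /=; rewrite ?subr_ge0 // (le_trans a0 ab).
Qed.

Lemma sum_bernoulli_coupling a b : \sum_j bernoulli_coupling a b j = 1.
Proof. by rewrite sumr_bool_pair /= add0r !subrKC. Qed.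

Lemma sum_bernoulli_coupling_fst a b x :
  \sum_(j | j.1 == x) bernoulli_coupling a b j = if x then b else 1 - b.
Proof.
by rewrite big_mkcond sumr_bool_pair; case: x; rewrite /= ?addr0 ?add0r // subrKC.
Qed.

Lemma sum_bernoulli_coupling_snd a b y :
  \sum_(j | j.2 == y) bernoulli_coupling a b j = if y then a else 1 - a.
Proof.
rewrite big_mkcond sumr_bool_pair; case: y; rewrite /= ?addr0 ?add0r //.
by rewrite [LHS]addrC addrA subrK.
Qed.

Lemma bernoulli_coupling_neq0 a b x y : bernoulli_coupling a b (x, y) != 0 -> y ==> x.
Proof. by case: x y => [] []; rewrite ?eqxx. Qed.

Lemma bernoulli_coupling_diag a x y : bernoulli_coupling a a (x, y) != 0 -> x = y.
Proof. by case: x y => [] [] //=; rewrite ?subrr eqxx. Qed.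

End BernoulliCoupling.

Section ProductCoupling.
Variables (R : numDomainType) (I : finType) (a b : I -> R).
Local Notation state := {ffun I -> (bool * bool)%type}.

Definition coupling_weight (f : state) : R :=
  \prod_i bernoulli_coupling (a i) (b i) (f i).

Definition fst_set (f : state) : {set I} := [set i | (f i).1].
Definition snd_set (f : state) : {set I} := [set i | (f i).2].

Lemma coupling_weight_ge0 f :
  (forall i, 0 <= a i <= b i) -> (forall i, b i <= 1) -> 0 <= coupling_weight f.
Proof. by move=> ab b1; apply: prodr_ge0 => i _; apply: bernoulli_coupling_ge0. Qed.

Lemma sum_coupling_weight : \sum_f coupling_weight f = 1.
Proof.
rewrite -(bigA_distr_bigA (fun i => bernoulli_coupling (a i) (b i))) /=.
by apply: big1 => i _; apply: sum_bernoulli_coupling.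
Qed.

Lemma sum_coupling_weight_fst (H : {set I}) :
  \sum_(f | fst_set f == H) coupling_weight f =
  \prod_i (if i \in H then b i else 1 - b i).
Proof.
rewrite (sum_ffun_fiber (fun i => bernoulli_coupling (a i) (b i)) fst).
by apply: eq_bigr => i _; apply: sum_bernoulli_coupling_fst.
Qed.

Lemma sum_coupling_weight_snd (H : {set I}) :
  \sum_(f | snd_set f == H) coupling_weight f =
  \prod_i (if i \in H then a i else 1 - a i).
Proof.
rewrite (sum_ffun_fiber (fun i => bernoulli_coupling (a i) (b i)) snd).
by apply: eq_bigr => i _; apply: sum_bernoulli_coupling_snd.
Qed.

Lemma coupling_weight_neq0 f : coupling_weight f != 0 ->
  snd_set f \subset fst_set f /\
  forall i, a i = b i -> (i \in fst_set f) = (i \in snd_set f).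
Proof.
move=> /prodf_neq0 nz; split.
  apply/subsetP => i; rewrite !inE; have := nz i isT.
  by case: (f i) => x y /bernoulli_coupling_neq0 /implyP.
move=> i abi; rewrite !inE; have := nz i isT; rewrite abi.
by case: (f i) => x y /bernoulli_coupling_diag.
Qed.

End ProductCoupling.

Section HypergraphCoupling.
Variables (R : realFieldType) (n : nat).
Local Notation simp := {set 'I_n.+1}.
Local Notation cplx := {set {set 'I_n.+1}}.

(* Parameter 0 on the empty and full faces: they never occur in the
   hypergraph, so a product over all faces restricts to [hyp_weight]. *)
Definition face_param (p : simp -> R) (s : simp) : R :=
  if proper_face s then p s else 0.

Lemma prod_face_param (p : simp -> R) (H : cplx) :
  \prod_s (if s \in H then face_param p s else 1 - face_param p s) =
  if H \subset proper_faces n then hyp_weight p H else 0.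
Proof.
rewrite (bigID (@proper_face n)) /=.
have -> : \prod_(s | proper_face s)
    (if s \in H then face_param p s else 1 - face_param p s) = hyp_weight p H.
  by apply: eq_bigr => s pf; rewrite /face_param pf.
case: ifP => [/subsetP sub|/negbT/subsetPn [s sH]].
  rewrite big1 ?mulr1 // => s npf; rewrite /face_param (negbTE npf) subr0.
  by case: ifP => // /sub; rewrite inE (negbTE npf).
rewrite inE => npf; rewrite (bigD1 s) //= /face_param (negbTE npf) sH.
by rewrite mul0r mulr0.
Qed.

Definition push_law (L : cplx -> cplx) (p : simp -> R) (K : cplx) : R :=
  \sum_(H : cplx | (H \subset proper_faces n) && (L H == K)) hyp_weight p H.

Variables (p p' : simp -> R) (L : cplx -> cplx).
Local Notation W := (coupling_weight (face_param p) (face_param p')).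

Definition hyp_coupling (z : cplx * cplx) : R :=
  \sum_(f | (L (fst_set f), L (snd_set f)) == z) W f.

Lemma sum_push_fiber (F : {ffun simp -> (bool * bool)%type} -> cplx) (q : simp -> R) X :
  (forall H, \sum_(f | F f == H) W f =
     \prod_s (if s \in H then face_param q s else 1 - face_param q s)) ->
  \sum_(f | L (F f) == X) W f = push_law L q X.
Proof.
move=> fiber; rewrite (partition_big F (fun H => L H == X)) => [|f //].
rewrite /push_law big_mkcondl /=; apply: eq_bigr => H /eqP LH.
rewrite -prod_face_param -fiber; apply: eq_bigl => f.
by case: (F f =P H) => [->|]; rewrite ?LH ?eqxx ?andbF.
Qed.

Lemma sum_hyp_coupling_fst X : \sum_Y hyp_coupling (X, Y) = push_law L p' X.
Proof.
rewrite -(sum_push_fiber X (sum_coupling_weight_fst _ _)).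
by rewrite [RHS](partition_big (fun f => L (snd_set f)) xpredT).
Qed.

Lemma sum_hyp_coupling_snd Y : \sum_X hyp_coupling (X, Y) = push_law L p Y.
Proof.
rewrite -(sum_push_fiber Y (sum_coupling_weight_snd _ _)).
rewrite [RHS](partition_big (fun f => L (fst_set f)) xpredT) //.
by apply: eq_bigr => X _; apply: eq_bigl => f; rewrite !xpair_eqE andbC.
Qed.

Lemma hyp_coupling_neq0 z : hyp_coupling z != 0 ->
  exists H' H : cplx, [/\ z = (L H', L H), H \subset H' &
    forall s, (proper_face s -> p s = p' s) -> (s \in H') = (s \in H)].
Proof.
move=> /sumr_neq0_exists [f /eqP <- /coupling_weight_neq0 [sub agree]].
exists (fst_set f), (snd_set f); split=> // s eq_s; apply: agree.
by rewrite /face_param; case: ifP => // /eq_s.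
Qed.

Lemma hyp_coupling_is_coupling :
  (forall s, proper_face s -> 0 <= p s <= 1) ->
  (forall s, proper_face s -> 0 <= p' s <= 1) ->
  (forall s, proper_face s -> p s <= p' s) ->
  (forall H, is_complex (L H)) ->
  {homo L : H1 H2 / H1 \subset H2} ->
  is_coupling hyp_coupling (push_law L p') (push_law L p).
Proof.
move=> hp hp' hpp L_complex L_mono.
have range s : 0 <= face_param p s <= face_param p' s /\ face_param p' s <= 1.
  rewrite /face_param; case: ifP => [pf|_]; last by rewrite lexx ler01.
  by have /andP[-> _] := hp s pf; have /andP[_ ->] := hp' s pf; rewrite hpp.
split.
- move=> z; apply: sumr_ge0 => f _.
  by apply: coupling_weight_ge0 => s; case: (range s).
- by rewrite -(sum_coupling_weight (face_param p) (face_param p'))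
     (partition_big (fun f => (L (fst_set f), L (snd_set f))) xpredT).
- move=> z /hyp_coupling_neq0 [H' [H [-> sub _]]].
  by rewrite /pairsP /= !L_complex L_mono.
- exact: sum_hyp_coupling_fst.
- exact: sum_hyp_coupling_snd.
Qed.

End HypergraphCoupling.

Section Complexes.
Variable n : nat.
Local Notation simp := {set 'I_n.+1}.
Local Notation cplx := {set {set 'I_n.+1}}.

Lemma lower_cplx_complex (H : cplx) : is_complex (lower_cplx H).
Proof.
apply/forallP => s; apply/implyP; rewrite inE => /andP[s0 /forallP hs].
rewrite s0 /=; apply/forallP => t; apply/implyP => /andP[t0 ts].
rewrite inE t0 /=; apply/forallP => u; apply/implyP => /andP[u0 ut].
by apply: (implyP (hs u)); rewrite u0 (subset_trans ut ts).
Qed.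

Lemma upper_cplx_complex (H : cplx) : is_complex (upper_cplx H).
Proof.
apply/forallP => s; apply/implyP; rewrite inE => /andP[s0 /existsP [t /andP[tH st]]].
rewrite s0 /=; apply/forallP => u; apply/implyP => /andP[u0 us].
by rewrite inE u0 /=; apply/existsP; exists t; rewrite tH (subset_trans us st).
Qed.

Lemma lower_cplx_mono : {homo @lower_cplx n : H1 H2 / H1 \subset H2}.
Proof.
move=> H1 H2 /subsetP sub; apply/subsetP => s; rewrite !inE => /andP[-> /forallP h].
by apply/forallP => t; apply/implyP => /(implyP (h t)) /sub.
Qed.

Lemma upper_cplx_mono : {homo @upper_cplx n : H1 H2 / H1 \subset H2}.
Proof.
move=> H1 H2 /subsetP sub; apply/subsetP => s; rewrite !inE.
move=> /andP[-> /existsP [t /andP[/sub tH st]]].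
by apply/existsP; exists t; rewrite tH.
Qed.

Lemma skeleton_lower_cplx k (H1 H2 : cplx) :
  (forall t : simp, (#|t| <= k.+1)%N -> (t \in H1) = (t \in H2)) ->
  skeleton k (lower_cplx H1) = skeleton k (lower_cplx H2).
Proof.
move=> H12; apply/setP => s; rewrite !inE.
case: (leqP #|s| k.+1) => hs; last by rewrite !andbF.
rewrite !andbT; congr (_ && _); apply: eq_forallb => t.
case: andP => //= [[_ ts]]; apply: H12; exact: leq_trans (subset_leq_card ts) hs.
Qed.

Lemma above_dim_upper_cplx (k : int) (H1 H2 : cplx) :
  (forall t : simp, k < #|t|%:Z - 1 -> (t \in H1) = (t \in H2)) ->
  above_dim k (upper_cplx H1) = above_dim k (upper_cplx H2).
Proof.
move=> H12; apply/setP => s; rewrite !inE.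
case hs: (k < _); last by rewrite !andbF.
rewrite !andbT; congr (_ && _); apply: eq_existsb => t.
case st: (s \subset t); rewrite ?andbF // !andbT; apply: H12.
by apply: lt_le_trans hs _; rewrite lerD2r lez_nat subset_leq_card.
Qed.

End Complexes.

Theorem theorem4p1 (R : realFieldType) (n : nat) (p p' : {set 'I_n.+1} -> R) :
  (forall s, proper_face s -> 0 <= p s <= 1) ->
  (forall s, proper_face s -> 0 <= p' s <= 1) ->
  (forall s, proper_face s -> p s <= p' s) ->
  (* (A) *)
  ((exists mu, is_coupling mu (lower_measure p') (lower_measure p)) /\
   (exists mu, is_coupling mu (upper_measure p') (upper_measure p))) /\
  (* (B) *)
  (forall k : nat,
     (forall s, proper_face s -> (#|s| <= k.+1)%N -> p s = p' s) ->
     exists mu, is_coupling mu (lower_measure p') (lower_measure p) /\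
       (forall z, mu z != 0 -> skeleton k z.1 = skeleton k z.2)) /\
  (* (C) *)
  (forall k : int,
     (forall s, proper_face s -> k < #|s|%:Z - 1 -> p s = p' s) ->
     exists mu, is_coupling mu (upper_measure p') (upper_measure p) /\
       (forall z, mu z != 0 -> above_dim k z.1 = above_dim k z.2)).
Proof.
move=> hp hp' hpp.
have lower := hyp_coupling_is_coupling hp hp' hpp
  (@lower_cplx_complex n) (@lower_cplx_mono n).
have upper := hyp_coupling_is_coupling hp hp' hpp
  (@upper_cplx_complex n) (@upper_cplx_mono n).
split; first by split; eexists; [exact: lower | exact: upper].
split=> k hk.
  exists (hyp_coupling p p' (@lower_cplx n)); split; first exact: lower.
  move=> z /hyp_coupling_neq0 [H' [H [-> _ agree]]] /=.
  by apply: skeleton_lower_cplx => t tk; apply: agree => /hk ->.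
exists (hyp_coupling p p' (@upper_cplx n)); split; first exact: upper.
move=> z /hyp_coupling_neq0 [H' [H [-> _ agree]]] /=.
by apply: above_dim_upper_cplx => t tk; apply: agree => /hk ->.
Qed.
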